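(* Let $(X,E,\ell)$ be a weighted tree and let $x\in X$. (a) If $\sum_{e\ni x}\frac{1}{1+e^{-\ell(e)}}\le\deg(x)-1$, then $x$ does not belong to the support of the diversity-maximizing measure of $X$. (b) If $\ell(e)\le\log 2$ for all $e\in E$, then no branch point of $X$ (vertex of degree at least $3$) belongs to the support of the diversity-maximizing measure of $X$.
   Context: A weighted tree is a triple $(X,E,\ell)$ with $(X,E)$ a finite simple undirected graph that is a tree and $\ell\colon E\to(0,\infty)$ edge lengths; the vertex set $X$ is a metric space with $d(x,y)$ the total length of the unique simple path between $x$ and $y$. $\deg x$ is the number of neighbours of $x$; $\sum_{e\ni x}$ is over edges containing $x$. The diversity-maximizing measure is the unique probability measure $\mu$ on $X$ minimizing $\sum_{x,y\in X}e^{-d(x,y)}\mu(x)\mu(y)$; its support is $\{x:\mu(x)>0\}$. *)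

From HB Require Import structures.
From mathcomp Require Import all_boot all_order all_algebra.
From mathcomp Require Import reals sequences exp.
From Stdlib Require Import ClassicalEpsilon.
Set Implicit Arguments. Unset Strict Implicit. Unset Printing Implicit Defensive.
Import Order.TTheory GRing.Theory Num.Theory.
Local Open Scope ring_scope.

Section WeightedTree.
Variables (R : realType) (T : finType).

(* A finite simple undirected graph on vertex set T: symmetric irreflexive
   adjacency relation.  The edge {x,y} has length ell x y (values of ell on
   non-adjacent pairs are irrelevant). *)
Definition simple_graph (adj : rel T) : Prop :=
  (forall x y, adj x y = adj y x) /\ (forall x, ~~ adj x x).

Definition simple_path (adj : rel T) (x y : T) (p : seq T) : bool :=
  [&& path adj x p, last x p == y & uniq (x :: p)].

Definition is_tree (adj : rel T) : Prop :=
  simple_graph adj /\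
  (forall x y, exists p, simple_path adj x y p) /\
  (forall x y p q, simple_path adj x y p -> simple_path adj x y q -> p = q).

Definition weighted_tree (adj : rel T) (ell : T -> T -> R) : Prop :=
  is_tree adj /\
  (forall x y, adj x y -> 0 < ell x y) /\
  (forall x y, adj x y -> ell x y = ell y x).

Definition path_length (ell : T -> T -> R) (x : T) (p : seq T) : R :=
  \sum_(e <- zip (x :: p) p) ell e.1 e.2.

Definition the_path (adj : rel T) (x y : T) : seq T :=
  epsilon (inhabits [::]) (fun p => simple_path adj x y p).

Definition tree_dist (adj : rel T) (ell : T -> T -> R) (x y : T) : R :=
  path_length ell x (the_path adj x y).

Definition deg (adj : rel T) (x : T) : nat := #|[set y | adj x y]|.

Definition is_prob (mu : T -> R) : Prop :=
  (forall x, 0 <= mu x) /\ \sum_(x : T) mu x = 1.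

Definition simil_form (adj : rel T) (ell : T -> T -> R) (mu : T -> R) : R :=
  \sum_(x : T) \sum_(y : T) expR (- tree_dist adj ell x y) * mu x * mu y.

(* mu is a (the) diversity-maximizing measure: a probability measure
   minimizing the quadratic form among all probability measures. *)
Definition diversity_maximizing (adj : rel T) (ell : T -> T -> R)
    (mu : T -> R) : Prop :=
  is_prob mu /\
  forall nu, is_prob nu -> simil_form adj ell mu <= simil_form adj ell nu.

End WeightedTree.

(* Write q_y = e^{-l(x,y)} for the neighbours y of x.  On a tree the similarity
   matrix Z = (e^{-d(u,v)}) has an explicit inverse supported on the diagonal and
   the edges: row x of Z^{-1} has entry 1 + sum_y q_y^2/(1 - q_y^2) at x and
   -q_y/(1 - q_y^2) at each neighbour y.  A minimizer mu of mu' Z mu over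
   probability measures satisfies (Z mu)(v) >= lambda := mu' Z mu everywhere,
   with equality on its support.  If mu(x) > 0, then
     mu(x) = (Z^{-1} Z mu)(x)
           = lambda * (row sum of Z^{-1} at x)
             - sum_y q_y/(1 - q_y^2) ((Z mu)(y) - lambda),
   and the row sum equals 1 + sum_y 1/(1 + q_y) - deg x, which the hypothesis makes
   nonpositive; hence mu(x) <= 0.  When l <= log 2 each 1/(1 + q_y) is at most 2/3,
   and 2 deg x / 3 <= deg x - 1 as soon as deg x >= 3. *)

From HB Require Import structures.
From mathcomp Require Import all_boot all_order all_algebra.
From mathcomp Require Import reals sequences exp.
From Stdlib Require Import ClassicalEpsilon.
From mathcomp Require Import ring lra.
Import Order.TTheory GRing.Theory Num.Theory.
Set Implicit Arguments.
Unset Strict Implicit.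
Unset Printing Implicit Defensive.

Local Open Scope ring_scope.

Lemma natr_deg (R : nzSemiRingType) (T : finType) (adj : rel T) x :
  (deg adj x)%:R = \sum_(y | adj x y) 1 :> R.
Proof. by rewrite /deg -sum1_card natr_sum; apply: eq_bigl => y; rewrite inE. Qed.

Lemma ge0_slope_quadratic (R : realFieldType) (L C : R) :
  (forall t : R, 0 < t -> t <= 1 -> 0 <= t * L + t ^+ 2 * C) -> 0 <= L.
Proof.
move=> quad_ge0; rewrite leNgt; apply/negP => L_lt0.
have den_gt0 : 0 < - L + `|C| + 1 by have := normr_ge0 C; lra.
pose t := - L / (- L + `|C| + 1).
have t_den : t * (- L + `|C| + 1) = - L by rewrite mulfVK // gt_eqF.
have t_gt0 : 0 < t by rewrite divr_gt0 // oppr_gt0.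
have t_le1 : t <= 1 by rewrite ler_pdivrMr // mul1r; have := normr_ge0 C; lra.
have C_le : t ^+ 2 * C <= t ^+ 2 * `|C| by rewrite ler_wpM2l ?ler_norm // exprn_ge0 // ltW.
have := quad_ge0 t t_gt0 t_le1; rewrite expr2 in C_le *; nra.
Qed.

Lemma inv1DexpN_le (R : realType) (l : R) : l <= ln 2 -> (1 + expR (- l))^-1 <= 2 / 3.
Proof.
move=> l_le; have half : expR (- ln 2) = 2^-1 :> R by rewrite expRN lnK // posrE.
have q_ge : 2^-1 <= expR (- l) by rewrite -half ler_expR lerN2.
by rewrite invf_ple ?posrE ?invf_div ?addr_gt0 ?expR_gt0 //; lra.
Qed.

Section QuadraticMinimizer.
Variables (R : realType) (T : finType) (K : T -> T -> R).
Hypothesis KC : forall x y, K x y = K y x.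

Definition bilin (f g : T -> R) : R := \sum_x \sum_y K x y * f x * g y.

Definition potential (g : T -> R) (x : T) : R := \sum_y K x y * g y.

Lemma bilin_potential f g : bilin f g = \sum_x f x * potential g x.
Proof.
apply: eq_bigr => x _; rewrite /potential mulr_sumr.
by apply: eq_bigr => y _; rewrite mulrCA mulrA.
Qed.

Lemma bilinC f g : bilin f g = bilin g f.
Proof.
rewrite /bilin exchange_big; apply: eq_bigr => y _; apply: eq_bigr => x _.
by rewrite KC mulrAC.
Qed.

Lemma bilin_shift f h t :
  bilin (fun x => f x + t * h x) (fun x => f x + t * h x) =
  bilin f f + t * (2 * bilin h f) + t ^+ 2 * bilin h h.
Proof.
rewrite mulr2n mulrDl mul1r {1}bilinC /bilin -big_split !mulr_sumr -!big_split /=.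
apply: eq_bigr => x _; rewrite -big_split !mulr_sumr -!big_split /=.
by apply: eq_bigr => y _; ring.
Qed.

Variable mu : T -> R.
Hypotheses (mu_prob : is_prob mu)
  (mu_min : forall nu, is_prob nu -> bilin mu mu <= bilin nu nu).

(* Moving mass from mu towards the Dirac mass at a must not decrease the form. *)
Lemma minimizer_potential_ge a : bilin mu mu <= potential mu a.
Proof.
have [mu_ge0 mu_sum1] := mu_prob.
have sum_delta F : \sum_x (x == a)%:R * F x = F a.
  by rewrite (bigD1 a) //= eqxx mul1r big1 ?addr0 // => x /negbTE ->; rewrite mul0r.
pose h x := (x == a)%:R - mu x.
have h_mu : bilin h mu = potential mu a - bilin mu mu.
  rewrite !bilin_potential -sum_delta -sumrB.
  by apply: eq_bigr => x _; rewrite mulrBl.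
suff : 0 <= 2 * bilin h mu by rewrite h_mu; lra.
apply: (ge0_slope_quadratic (C := bilin h h)) => t t_gt0 t_le1.
have shift_prob : is_prob (fun x => mu x + t * h x).
  split=> [x|]; first by rewrite /h; have := mu_ge0 x; case: (x == a) => /=; nra.
  rewrite big_split -mulr_sumr sumrB mu_sum1 /=.
  by under eq_bigr do rewrite -[(_ == a)%:R]mulr1; rewrite sum_delta subrr mulr0 addr0.
by have := mu_min shift_prob; rewrite bilin_shift; lra.
Qed.

Lemma minimizer_potential_support a : mu a != 0 -> potential mu a = bilin mu mu.
Proof.
have [mu_ge0 mu_sum1] := mu_prob.
have slack_ge0 x : 0 <= mu x * (potential mu x - bilin mu mu).
  by rewrite mulr_ge0 // subr_ge0 minimizer_potential_ge.
have slack_sum : \sum_x mu x * (potential mu x - bilin mu mu) = 0.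
  under eq_bigr do rewrite mulrBr.
  by rewrite sumrB -bilin_potential -mulr_suml mu_sum1 mul1r subrr.
move=> mu_a; have /eqP := psumr_eq0P (fun x _ => slack_ge0 x) slack_sum (i := a) isT.
by rewrite mulf_eq0 (negbTE mu_a) subr_eq0 => /eqP.
Qed.

End QuadraticMinimizer.

Section PathLength.
Variables (R : realType) (T : finType) (ell : T -> T -> R).

Lemma path_length_cons x y p :
  path_length ell x (y :: p) = ell x y + path_length ell y p.
Proof. by rewrite /path_length /= big_cons. Qed.

Lemma path_length_rcons x p y :
  path_length ell x (rcons p y) = path_length ell x p + ell (last x p) y.
Proof.
elim: p x => [|a p IHp] x; first by rewrite /path_length /= big_cons big_nil add0r addr0.
by rewrite /= !path_length_cons IHp addrA.
Qed.

Lemma path_length_rev (adj : rel T) x p :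
  (forall a b, adj a b -> ell a b = ell b a) -> path adj x p ->
  path_length ell (last x p) (rev (belast x p)) = path_length ell x p.
Proof.
move=> ellC; elim: p x => [|a p IHp] x //= /andP[adj_xa adj_p].
rewrite rev_cons path_length_rcons IHp // path_length_cons addrC (ellC _ _ adj_xa).
congr (ell _ x + _).
case/lastP: p {IHp adj_p} => [|q b] //=.
by rewrite last_rcons belast_rcons rev_cons last_rcons.
Qed.

End PathLength.

Section WeightedTree.
Variables (R : realType) (T : finType) (adj : rel T) (ell : T -> T -> R).
Hypothesis tree_ell : weighted_tree adj ell.

Let tree_adj : is_tree adj. Proof. by case: tree_ell. Qed.
Let adjC : forall x y, adj x y = adj y x. Proof. by case: tree_adj => -[]. Qed.
Let ellC : forall x y, adj x y -> ell x y = ell y x. Proof. by case: tree_ell => _ []. Qed.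

Lemma the_pathP x z : simple_path adj x z (the_path adj x z).
Proof.
have [_ [ex_path _]] := tree_adj.
exact: (epsilon_spec _ (fun p => simple_path adj x z p) (ex_path x z)).
Qed.

Lemma tree_dist_path x z p :
  simple_path adj x z p -> tree_dist adj ell x z = path_length ell x p.
Proof.
by have [_ [_ uniq_path]] := tree_adj; move/(uniq_path _ _ _ _ (the_pathP x z)) <-.
Qed.

Lemma tree_distC x z : tree_dist adj ell x z = tree_dist adj ell z x.
Proof.
have := the_pathP x z; rewrite (tree_dist_path (the_pathP x z)).
set p := the_path adj x z => /and3P[path_p /eqP last_p uniq_p].
have rev_p : simple_path adj z x (rev (belast x p)).
  apply/and3P; split.
  - by rewrite -last_p rev_path (@eq_path _ _ adj) // => a b; rewrite adjC.
  - by case/lastP: p last_p {path_p uniq_p} => [|q b] /= <-;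
      rewrite ?belast_rcons ?rev_cons ?last_rcons.
  - by rewrite -rev_rcons -last_p -lastI rev_uniq.
by rewrite (tree_dist_path rev_p) -last_p (path_length_rev ellC).
Qed.

Lemma adj_neq x y : adj x y -> x != y.
Proof. by have [[_ irr] _] := tree_adj; apply: contraTneq => ->. Qed.

(* [head x (the_path adj x z)] is the first step from x towards z, or x itself
   when z = x; in the latter case it is never a neighbour of x. *)
Lemma tree_dist_neighbor x y z : adj x y ->
  tree_dist adj ell y z =
  if head x (the_path adj x z) == y then tree_dist adj ell x z - ell x y
  else tree_dist adj ell x z + ell x y.
Proof.
move=> adj_xy; have [_ [_ uniq_path]] := tree_adj.
have := the_pathP x z; rewrite (tree_dist_path (the_pathP x z)).
case: (the_path adj x z) => [|y' p] /and3P[/= path_p /eqP last_p uniq_p].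
  subst z; rewrite (negbTE (adj_neq adj_xy)).
  have y_path : simple_path adj y x [:: x].
    by rewrite /simple_path /= adjC adj_xy eqxx inE andbT eq_sym adj_neq.
  rewrite (tree_dist_path y_path) path_length_cons /path_length /= !big_nil.
  by rewrite addr0 add0r ellC // adjC.
move: path_p uniq_p => /andP[adj_xy' path_p] /andP[x_p uniq_p].
have [<- | ne_y] := eqVneq y' y.
  rewrite (@tree_dist_path y' z p); last first.
    by rewrite /simple_path /= path_p last_p eqxx uniq_p.
  by rewrite path_length_cons addrC addKr.
have y_notin : y \notin y' :: p.
  have : [/\ path adj x (y' :: p), uniq (x :: y' :: p) & head x (y' :: p) != y].
    by split; rewrite /= ?adj_xy' ?path_p ?x_p ?uniq_p.
  apply: contraPN => /splitPr[p1 p2] [path_xp uniq_xp head_ne].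
  have prefix_path : simple_path adj x y (rcons p1 y).
    move: path_xp uniq_xp; rewrite -cat_rcons cat_path -cat_cons cat_uniq.
    by case/andP=> path_p1 _ /andP[uniq_p1 _]; rewrite /simple_path last_rcons eqxx path_p1.
  have edge_path : simple_path adj x y [:: y].
    by rewrite /simple_path /= adj_xy eqxx inE andbT adj_neq.
  have := uniq_path _ _ _ _ prefix_path edge_path.
  by case: p1 {prefix_path path_xp uniq_xp} head_ne => [|a [|b q]] //=; rewrite eqxx.
have y_path : simple_path adj y z (x :: y' :: p).
  rewrite /simple_path /= last_p eqxx adjC adj_xy adj_xy' path_p x_p uniq_p.
  by rewrite in_cons negb_or y_notin eq_sym adj_neq.
by rewrite (tree_dist_path y_path) path_length_cons ellC 1?addrC // adjC.
Qed.

Lemma expN_edge_lt1 x y : adj x y -> expR (- ell x y) < 1.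
Proof. by case: tree_ell => _ [pos _] /pos ell_gt0; rewrite expR_lt1 oppr_lt0. Qed.

Lemma expN_edge_den_gt0 x y : adj x y -> 0 < 1 - expR (- ell x y) ^+ 2.
Proof. by move/expN_edge_lt1=> q_lt1; rewrite subr_gt0 expr_lt1 ?expR_ge0. Qed.

(* The diagonal entry and the negated edge entries of the inverse of the
   similarity matrix of the tree. *)
Definition zinv_edge x y := expR (- ell x y) / (1 - expR (- ell x y) ^+ 2).

Definition zinv_diag x := 1 + \sum_(y | adj x y) expR (- ell x y) * zinv_edge x y.

Lemma zinv_edge_similarity x y z : adj x y ->
  zinv_edge x y * expR (- tree_dist adj ell y z) =
  (expR (- ell x y) * zinv_edge x y + (head x (the_path adj x z) == y)%:R)
    * expR (- tree_dist adj ell x z).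
Proof.
move=> adj_xy; rewrite (tree_dist_neighbor z adj_xy) /zinv_edge.
have q_neq0 : expR (- ell x y) != 0 by rewrite gt_eqF ?expR_gt0.
have den_neq0 := lt0r_neq0 (expN_edge_den_gt0 adj_xy).
have expR_ell : expR (ell x y) = (expR (- ell x y))^-1 by rewrite expRN invrK.
case: eqP => _ /=.
  by rewrite opprB expRD expR_ell; field; apply/andP.
by rewrite opprD expRD; field.
Qed.

Lemma zinv_row_similarity x z :
  zinv_diag x * expR (- tree_dist adj ell x z)
  - \sum_(y | adj x y) zinv_edge x y * expR (- tree_dist adj ell y z) = (z == x)%:R.
Proof.
rewrite (eq_bigr _ (fun y => zinv_edge_similarity z)) -mulr_suml big_split /=.
rewrite /zinv_diag -mulrBl opprD addrA addrK.
have := the_pathP x z; case: (the_path adj x z) => [|y0 p] x_path.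
  have [_ /eqP /= x_z _] := and3P x_path; subst z.
  rewrite big1 => [|y /adj_neq /negbTE -> //].
  by rewrite subr0 mul1r (tree_dist_path x_path) /path_length big_nil oppr0 expR0 eqxx.
have [/= /andP[adj_xy0 _] /eqP last_p /andP[x_notin _]] := and3P x_path.
rewrite (bigD1 y0) //= eqxx big1 => [|y /andP[_]]; last by rewrite eq_sym => /negbTE ->.
rewrite addr0 subrr mul0r; apply/esym/eqP; rewrite pnatr_eq0 eqb0 -last_p.
by apply: contraNneq x_notin => <-; apply: mem_last.
Qed.

Lemma zinv_edge_ge0 x y : adj x y -> 0 <= zinv_edge x y.
Proof. by move=> adj_xy; rewrite divr_ge0 ?expR_ge0 ?ltW ?expN_edge_den_gt0. Qed.

Lemma zinv_row_sum x :
  zinv_diag x - \sum_(y | adj x y) zinv_edge x y =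
  1 + \sum_(y | adj x y) (1 + expR (- ell x y))^-1 - (deg adj x)%:R.
Proof.
rewrite /zinv_diag natr_deg -!addrA -!sumrB; congr (1 + _).
apply: eq_bigr => y adj_xy; rewrite /zinv_edge.
have den_neq0 := lt0r_neq0 (expN_edge_den_gt0 adj_xy).
have q1_neq0 : 1 + expR (- ell x y) != 0 by rewrite gt_eqF // addr_gt0 ?expR_gt0.
by field; apply/andP.
Qed.

Local Notation sim := (fun x z => expR (- tree_dist adj ell x z)).

Lemma mass_zinv_potential (mu : T -> R) x :
  mu x = zinv_diag x * potential sim mu x
         - \sum_(y | adj x y) zinv_edge x y * potential sim mu y.
Proof.
transitivity (\sum_z (z == x)%:R * mu z).
  by rewrite (bigD1 x) //= eqxx mul1r big1 ?addr0 // => z /negbTE ->; rewrite mul0r.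
under eq_bigr do rewrite -zinv_row_similarity mulrBl.
rewrite sumrB /potential mulr_sumr; congr (_ - _).
  by apply: eq_bigr => z _; rewrite mulrA.
under eq_bigr do rewrite mulr_suml; rewrite exchange_big /=.
by apply: eq_bigr => y _; rewrite mulr_sumr; apply: eq_bigr => z _; rewrite mulrA.
Qed.

Lemma diversity_maximizing_eq0 mu x :
  diversity_maximizing adj ell mu ->
  \sum_(y | adj x y) (1 + expR (- ell x y))^-1 <= (deg adj x)%:R - 1 ->
  mu x = 0.
Proof.
move=> [mu_prob mu_min] crowded; have [mu_ge0 _] := mu_prob.
have simC y z : sim y z = sim z y by rewrite /= tree_distC.
have [// | mu_x_neq0] := eqVneq (mu x) 0.
apply/le_anti; rewrite mu_ge0 andbT.
set W := potential sim mu; set lam := bilin sim mu mu.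
have W_ge y : lam <= W y := minimizer_potential_ge simC mu_prob mu_min y.
have lam_ge0 : 0 <= lam.
  rewrite /lam bilin_potential sumr_ge0 // => y _.
  by rewrite mulr_ge0 ?sumr_ge0 // => z _; rewrite mulr_ge0 ?expR_ge0.
have mu_x : mu x = lam * (zinv_diag x - \sum_(y | adj x y) zinv_edge x y)
                   - \sum_(y | adj x y) zinv_edge x y * (W y - lam).
  rewrite mass_zinv_potential.
  rewrite (minimizer_potential_support simC mu_prob mu_min mu_x_neq0) -/W -/lam.
  by under [X in _ = _ - X]eq_bigr do rewrite mulrBr; rewrite sumrB -mulr_suml; ring.
rewrite mu_x zinv_row_sum subr_le0.
apply: le_trans (sumr_ge0 _ _) => [|y adj_xy].
  by rewrite mulr_ge0_le0 //; lra.
by rewrite mulr_ge0 ?zinv_edge_ge0 ?subr_ge0.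
Qed.

End WeightedTree.

Theorem corollary4p3 (R : realType) (T : finType) (adj : rel T)
    (ell : T -> T -> R) (mu : T -> R) :
  weighted_tree adj ell ->
  diversity_maximizing adj ell mu ->
  (forall x : T,
      \sum_(y : T | adj x y) (1 + expR (- ell x y))^-1 <= (deg adj x)%:R - 1 ->
      mu x = 0) /\
  ((forall x y : T, adj x y -> ell x y <= ln 2) ->
      forall x : T, (3 <= deg adj x)%N -> mu x = 0).
Proof.
move=> tree_ell max_mu; split=> [x|ell_le x deg_ge3]; first exact: diversity_maximizing_eq0.
apply: (diversity_maximizing_eq0 tree_ell max_mu).
have deg_ge3R : 3 <= (deg adj x)%:R :> R by rewrite (ler_nat R 3).
have := ler_sum (index_enum T) (fun y adj_xy => inv1DexpN_le (ell_le x y adj_xy)).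
by rewrite -[in X in _ <= X -> _](mul1r (2 / 3)) -mulr_suml -natr_deg; lra.
Qed.
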